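(* Let $\lambda_1,\dots,\lambda_p\ge0$ be pairwise distinct, $\Sigma=\mathrm{diag}(\lambda_1,\dots,\lambda_p)$, $E$ a real symmetric $p\times p$ matrix, $\widehat\Sigma=\Sigma+E$, $x$ an eigenvalue of $\widehat\Sigma$, and $k\in\arg\min_m|\lambda_m-x|$. Let $\Lambda_k=|D_k|^{1/2}E|D_k|^{1/2}$ and suppose $\|\Lambda_k\|<1$. Then $I_p-D_kEP_k$ is invertible, and every eigenvector $\vec\eta$ of $\widehat\Sigma$ for $x$ satisfies $\langle\vec\eta,\vec\mu_k\rangle\ne0$; normalizing so that $\langle\vec\eta,\vec\mu_k\rangle=1$, we have $$\|\vec\eta-\vec\mu_k\|\le\sqrt{\frac{2}{\delta_k}}\;\frac{1}{1-\|\Lambda_k\|}\;\Bigl(\sum_{j\ne k}\frac{E_{jk}^2}{|\lambda_j-x|}\Bigr)^{1/2}.$$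
   Context: $\vec\mu_1,\dots,\vec\mu_p$ are the standard basis vectors of $\mathbb R^p$; $\|\cdot\|$ is the Euclidean norm for vectors and operator norm for matrices; $\delta_k=\min_{j\ne k}|\lambda_k-\lambda_j|$. $P_k$ is the diagonal matrix with entry $0$ at position $k$ and $1$ elsewhere. $D_k=-\mathrm{diag}(d_1,\dots,d_p)$ with $d_j=1/(\lambda_j-x)$ for $j\ne k$ and $d_k=0$ (well defined since $x\ne\lambda_j$ for $j\neq k$ by the choice of $k$). $|D_k|^{1/2}$ is the diagonal matrix with entries $|\lambda_j-x|^{-1/2}$ for $j\ne k$ and $0$ at position $k$. *)

From HB Require Import structures.
From mathcomp Require Import all_boot all_order all_algebra.
Set Implicit Arguments. Unset Strict Implicit. Unset Printing Implicit Defensive.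
Import Order.TTheory GRing.Theory Num.Theory.
Local Open Scope ring_scope.

Section Defs.
Variable R : rcfType.
Variable p : nat.

Definition vnorm (v : 'cV[R]_p) : R := Num.sqrt (\sum_i (v i 0) ^+ 2).

Definition is_opnorm (A : 'M[R]_p) (c : R) : Prop :=
  (forall v : 'cV[R]_p, vnorm (A *m v) <= c * vnorm v) /\
  (forall c' : R, (forall v : 'cV[R]_p, vnorm (A *m v) <= c' * vnorm v) -> c <= c').

Definition mu (k : 'I_p) : 'cV[R]_p := delta_mx k 0.

Definition Sigma (lam : 'I_p -> R) : 'M[R]_p := diag_mx (\row_j lam j).

Definition Pk (k : 'I_p) : 'M[R]_p := diag_mx (\row_j (if j == k then 0 else 1)).

Definition Dk (lam : 'I_p -> R) (x : R) (k : 'I_p) : 'M[R]_p :=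
  diag_mx (\row_j (if j == k then 0 else - (lam j - x)^-1)).

Definition absDk_half (lam : 'I_p -> R) (x : R) (k : 'I_p) : 'M[R]_p :=
  diag_mx (\row_j (if j == k then 0 else (Num.sqrt `|lam j - x|)^-1)).

(* The big min is seeded with
   \sum_j |lambda_k - lambda_j|, which dominates every term, so for p >= 2 this
   is exactly the minimum; for p = 1 (empty min) it is 0, a value irrelevant
   since the remaining factor of the bound is then an empty sum. *)
Definition delta (lam : 'I_p -> R) (k : 'I_p) : R :=
  \big[Num.min/ \sum_j `|lam k - lam j|]_(j | j != k) `|lam k - lam j|.

End Defs.
Arguments mu {R p} k.
Arguments Pk {R p} k.

From HB Require Import structures.
From mathcomp Require Import all_boot all_order all_algebra.
From mathcomp Require Import ring lra.
Import Order.TTheory GRing.Theory Num.Theory.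
Set Implicit Arguments.
Unset Strict Implicit.
Unset Printing Implicit Defensive.
Local Open Scope ring_scope.

(* Writing D_k = H S H with H = |D_k|^{1/2} and S the diagonal sign matrix,
   the eigenvalue equation for an eigenvector normalised by eta_k = 1 becomes
   the fixed-point equation v = D_k E (mu_k + v) for v = eta - mu_k.  Then
   u := S H E (mu_k + v) satisfies v = H u and u = S (H E mu_k) + S Lambda_k u,
   so |u| <= |H E mu_k| + ||Lambda_k|| |u|, while |H| <= sqrt (2 / delta_k)
   because delta_k <= |lambda_k - lambda_j| <= 2 |lambda_j - x| by the choice
   of k.  Taking mu_k-component 0 instead of 1 shows that the fixed-point
   equation only has the trivial solution, which gives both the invertibility
   of I - D_k E P_k and eta_k <> 0. *)

Section EuclideanNorm.
Variables (R : rcfType) (p : nat).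
Implicit Types a b : 'cV[R]_p.

Lemma vnorm_ge0 a : 0 <= vnorm a.
Proof. exact: sqrtr_ge0. Qed.

Lemma sqr_vnorm a : vnorm a ^+ 2 = \sum_i a i 0 ^+ 2.
Proof. by rewrite sqr_sqrtr // sumr_ge0 // => i _; rewrite sqr_ge0. Qed.

Lemma vnorm_eq0 a : vnorm a = 0 -> a = 0.
Proof.
move=> /eqP; rewrite sqrtr_eq0 => sum_le0.
have sum0 : \sum_i a i 0 ^+ 2 = 0.
  by apply/eqP; rewrite eq_le sum_le0 sumr_ge0 // => i _; rewrite sqr_ge0.
apply/matrixP => i j; rewrite (ord1 j) mxE.
have /eqP := @psumr_eq0P _ _ xpredT _ (fun l _ => sqr_ge0 (a l 0)) sum0 i isT.
by rewrite sqrf_eq0 => /eqP.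
Qed.

Lemma vnormZ (s : R) a : vnorm (s *: a) = `|s| * vnorm a.
Proof.
rewrite /vnorm -sqrtr_sqr -sqrtrM ?sqr_ge0 // mulr_sumr; congr Num.sqrt.
by apply: eq_bigr => i _; rewrite mxE exprMn.
Qed.

Lemma vnorm_le_pointwise a b (t : R) : 0 <= t ->
  (forall i, a i 0 ^+ 2 <= t * b i 0 ^+ 2) -> vnorm a <= Num.sqrt t * vnorm b.
Proof.
move=> t_ge0 le_ab; rewrite /vnorm -sqrtrM // ler_sqrt.
  by rewrite mulr_sumr; apply: ler_sum => i _; apply: le_ab.
by rewrite mulr_ge0 // sumr_ge0 // => i _; rewrite sqr_ge0.
Qed.

Lemma cauchy_schwarz a b : \sum_i a i 0 * b i 0 <= vnorm a * vnorm b.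
Proof.
set A := vnorm a; set B := vnorm b.
have [/eqP|AB_neq0] := eqVneq (A * B) 0.
  rewrite mulf_eq0 => /orP[] /eqP /vnorm_eq0 ->;
  by rewrite big1 ?mulr_ge0 ?vnorm_ge0 // => i _; rewrite mxE ?mul0r ?mulr0.
have AB_gt0 : 0 < 2 * (A * B) by rewrite mulr_gt0 // lt_def AB_neq0 mulr_ge0 ?vnorm_ge0.
rewrite -(ler_pM2l AB_gt0) -subr_ge0.
have -> : 2 * (A * B) * (A * B) - 2 * (A * B) * \sum_i a i 0 * b i 0
        = \sum_i (a i 0 * B - b i 0 * A) ^+ 2.
  have expand i : (a i 0 * B - b i 0 * A) ^+ 2
      = a i 0 ^+ 2 * B ^+ 2 + b i 0 ^+ 2 * A ^+ 2 - 2 * (A * B) * (a i 0 * b i 0).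
    by ring.
  rewrite (eq_bigr _ (fun i _ => expand i)) sumrB big_split /= -!mulr_suml.
  by rewrite -!sqr_vnorm -/A -/B -mulr_sumr; ring.
by rewrite sumr_ge0 // => i _; rewrite sqr_ge0.
Qed.

Lemma vnormD_le a b : vnorm (a + b) <= vnorm a + vnorm b.
Proof.
rewrite -(ler_pXn2r (n := 2)) ?nnegrE ?addr_ge0 ?vnorm_ge0 //.
rewrite sqr_vnorm sqrrD !sqr_vnorm.
have -> : \sum_i (a + b) i 0 ^+ 2 =
    \sum_i a i 0 ^+ 2 + (\sum_i a i 0 * b i 0) *+ 2 + \sum_i b i 0 ^+ 2.
  by rewrite -sumrMnl -!big_split; apply: eq_bigr => i _; rewrite mxE sqrrD.
by rewrite lerD2r lerD2l lerMn2r /= cauchy_schwarz.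
Qed.

Lemma vnorm_diag_mul_le (d : 'rV[R]_p) (t : R) a : 0 <= t ->
  (forall j, d 0 j ^+ 2 <= t) -> vnorm (diag_mx d *m a) <= Num.sqrt t * vnorm a.
Proof.
move=> t_ge0 d_le; apply: vnorm_le_pointwise => // i.
by rewrite mul_diag_mx mxE exprMn ler_wpM2r ?sqr_ge0.
Qed.

End EuclideanNorm.

Lemma unitmx_ker0 (F : fieldType) (n : nat) (A : 'M[F]_n) :
  (forall v : 'cV_n, A *m v = 0 -> v = 0) -> A \in unitmx.
Proof.
move=> ker0; rewrite unitmxE unitfE -det_tr; apply/negP => /det0P[r r_neq0 rA0].
have /ker0/(congr1 trmx) : A *m r^T = 0 by rewrite -[LHS]trmxK trmx_mul trmxK rA0 trmx0.
by rewrite trmxK trmx0 => r0; rewrite r0 eqxx in r_neq0.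
Qed.

Definition sgDk (R : rcfType) (p : nat) (lam : 'I_p -> R) (x : R) (k : 'I_p) : 'M[R]_p :=
  diag_mx (\row_j (if j == k then 0 else - Num.sg (lam j - x))).

Section DiagonalFactors.
Variables (R : rcfType) (p : nat) (lam : 'I_p -> R) (x : R) (k : 'I_p).

Lemma Pk_mul (v : 'cV[R]_p) : Pk k *m v = v - v k 0 *: mu k.
Proof.
apply/matrixP => i j; rewrite (ord1 j) mul_diag_mx !mxE.
case: (eqVneq i k) => [->|_]; first by rewrite eqxx mulr1 subrr mul0r.
by rewrite mul1r mulr0 subr0.
Qed.

Lemma Pk_Dk : Pk k *m Dk lam x k = Dk lam x k.
Proof.
rewrite /Pk /Dk mulmx_diag; congr diag_mx; apply/rowP => j; rewrite !mxE.
by case: (j == k); rewrite ?mul0r ?mul1r.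
Qed.

(* No hypothesis on x is needed: at lambda_j = x both sides vanish, since 0^-1 = 0. *)
Lemma Dk_factor :
  Dk lam x k = absDk_half lam x k *m sgDk lam x k *m absDk_half lam x k.
Proof.
rewrite /absDk_half /sgDk /Dk !mulmx_diag; congr diag_mx; apply/rowP => j.
rewrite !mxE; case: (j == k); rewrite ?mul0r // mulrAC -invfM -expr2.
by rewrite sqr_sqrtr // -normfV -sgrV mulrN mulrC mulr_sg_norm.
Qed.

Lemma vnorm_sgDk_mul_le (v : 'cV[R]_p) : vnorm (sgDk lam x k *m v) <= vnorm v.
Proof.
rewrite -[leRHS]mul1r -sqrtr1; apply: vnorm_diag_mul_le => // j; rewrite mxE.
case: (j == k); first by rewrite expr0n ler01.
by rewrite sqrrN sqr_sg; case: (_ != 0); rewrite ?ler01.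
Qed.

Lemma vnorm_absDk_E_mu (E : 'M[R]_p) :
  vnorm (absDk_half lam x k *m E *m mu k) =
  Num.sqrt (\sum_(j | j != k) E j k ^+ 2 / `|lam j - x|).
Proof.
rewrite /vnorm; congr Num.sqrt; rewrite [RHS]big_mkcond /=; apply: eq_bigr => j _.
rewrite -mulmxA mul_diag_mx /mu -colE !mxE.
case: (eqVneq j k) => [->|_]; first by rewrite mul0r expr0n.
by rewrite exprMn exprVn sqr_sqrtr // mulrC.
Qed.

End DiagonalFactors.

Section Perturbation.
Variables (R : rcfType) (p : nat) (lam : 'I_p -> R) (E : 'M[R]_p) (x : R) (k : 'I_p).
Hypothesis lam_inj : injective lam.
Hypothesis k_closest : forall m : 'I_p, `|lam k - x| <= `|lam m - x|.

Lemma lam_subx_neq0 j : j != k -> lam j - x != 0.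
Proof.
move=> jk; apply: contraNneq jk => ljx; have := k_closest j.
rewrite ljx normr0 normr_le0 subr_eq0 => /eqP lkx.
by apply/eqP/lam_inj; rewrite lkx; apply/eqP; rewrite -subr_eq0 ljx.
Qed.

Lemma delta_ge0 : 0 <= delta lam k.
Proof.
apply: (big_ind (fun y => 0 <= y)) => //; first by rewrite sumr_ge0.
by move=> a b a_ge0 b_ge0; rewrite le_min a_ge0 b_ge0.
Qed.

Lemma delta_le_dist j : j != k -> delta lam k <= `|lam k - lam j|.
Proof. by move=> jk; rewrite /delta (bigD1 j) //= ge_min lexx. Qed.

Lemma delta_gt0 j : j != k -> 0 < delta lam k.
Proof.
have dist_gt0 i : i != k -> 0 < `|lam k - lam i|.
  by move=> ik; rewrite normr_gt0 subr_eq0 (inj_eq lam_inj) eq_sym.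
move=> jk; apply: (big_ind (fun y => 0 < y)).
- by rewrite (bigD1 j) //= ltr_wpDr ?dist_gt0 // sumr_ge0.
- by move=> a b a_gt0 b_gt0; rewrite lt_min a_gt0 b_gt0.
- exact: dist_gt0.
Qed.

Lemma vnorm_absDk_mul_le (v : 'cV[R]_p) :
  vnorm (absDk_half lam x k *m v) <= Num.sqrt (2 / delta lam k) * vnorm v.
Proof.
apply: vnorm_diag_mul_le; first by rewrite divr_ge0 ?delta_ge0.
move=> j; rewrite mxE; case: (eqVneq j k) => [_|jk].
  by rewrite expr0n /= divr_ge0 ?delta_ge0.
have d_gt0 : 0 < `|lam j - x| by rewrite normr_gt0 lam_subx_neq0.
rewrite exprVn sqr_sqrtr // -invf_div lef_pV2 ?posrE ?divr_gt0 ?(delta_gt0 jk) //.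
rewrite ler_pdivrMr //.
have := ler_normB (lam k - x) (lam j - x); rewrite opprB addrA subrK.
move: (k_closest j) (delta_le_dist jk); lra.
Qed.

Lemma Dk_E_eigvec (y : 'cV[R]_p) :
  (Sigma lam + E) *m y = x *: y -> Dk lam x k *m E *m y = Pk k *m y.
Proof.
move=> eig; apply/matrixP => j i; rewrite (ord1 i) -mulmxA !mul_diag_mx !mxE.
case: (eqVneq j k) => [_|jk]; first by rewrite !mul0r.
have /(congr1 (fun M : 'cV[R]_p => M j 0)) := eig.
rewrite mulmxDl mul_diag_mx !mxE => eig_j.
have -> : \sum_l E j l * y l 0 = (x - lam j) * y j 0 by rewrite mulrBl -eig_j; ring.
by rewrite mul1r; field; rewrite lam_subx_neq0.
Qed.

Variable c : R.
Hypothesis Lambda_norm : is_opnorm (absDk_half lam x k *m E *m absDk_half lam x k) c.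
Hypothesis c_lt1 : c < 1.

Lemma Dk_E_fixpoint_bound (a : R) (v : 'cV[R]_p) :
  v = Dk lam x k *m E *m (a *: mu k + v) ->
  vnorm v <= Num.sqrt (2 / delta lam k) * (1 - c)^-1 *
             (`|a| * vnorm (absDk_half lam x k *m E *m mu k)).
Proof.
set H := absDk_half lam x k; set S := sgDk lam x k; set N := vnorm (H *m E *m mu k).
move=> fix_v; pose u := S *m (H *m E *m (a *: mu k + v)).
have v_Hu : v = H *m u by rewrite {1}fix_v Dk_factor /u !mulmxA.
have u_eq : u = S *m (a *: (H *m E *m mu k)) + S *m (H *m E *m H *m u).
  have HEv : H *m E *m v = H *m E *m H *m u by rewrite {1}v_Hu !mulmxA.
  by rewrite {1}/u mulmxDr -scalemxAr HEv mulmxDr.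
have u_le : vnorm u <= `|a| * N + c * vnorm u.
  rewrite {1}u_eq; apply: le_trans (vnormD_le _ _) _; apply: lerD.
    by rewrite -vnormZ vnorm_sgDk_mul_le.
  exact: le_trans (vnorm_sgDk_mul_le _ _ _ _) (proj1 Lambda_norm u).
have u_bound : vnorm u <= (1 - c)^-1 * (`|a| * N).
  rewrite ler_pdivlMl ?subr_gt0 //; move: u_le; lra.
rewrite v_Hu -mulrA; apply: le_trans (vnorm_absDk_mul_le u) _.
by rewrite ler_wpM2l ?sqrtr_ge0.
Qed.

Lemma Dk_E_fixpoint_eq0 (v : 'cV[R]_p) : v = Dk lam x k *m E *m v -> v = 0.
Proof.
move=> fix_v; apply: vnorm_eq0; apply/eqP; rewrite eq_le vnorm_ge0 andbT.
have := @Dk_E_fixpoint_bound 0 v; rewrite normr0 !mul0r mulr0; apply.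
by rewrite scale0r add0r.
Qed.

End Perturbation.

Theorem mainTheorem5 (R : rcfType) (p : nat) (lam : 'I_p -> R) (E : 'M[R]_p)
    (x : R) (k : 'I_p) (c : R) :
  (forall j, 0 <= lam j) ->
  injective lam ->
  E^T = E ->
  (exists2 v : 'cV[R]_p, v != 0 & (Sigma lam + E) *m v = x *: v) ->
  (forall m : 'I_p, `|lam k - x| <= `|lam m - x|) ->
  is_opnorm (absDk_half lam x k *m E *m absDk_half lam x k) c ->
  c < 1 ->
  (1%:M - Dk lam x k *m E *m Pk k) \in unitmx /\
  (forall eta : 'cV[R]_p, eta != 0 -> (Sigma lam + E) *m eta = x *: eta ->
     eta k 0 != 0 /\
     vnorm ((eta k 0)^-1 *: eta - mu k) <=
       Num.sqrt (2 / delta lam k) * (1 - c)^-1 *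
       Num.sqrt (\sum_(j | j != k) (E j k) ^+ 2 / `|lam j - x|)).
Proof.
move=> _ lam_inj _ _ k_closest Lambda_norm c_lt1.
have fix0 := Dk_E_fixpoint_eq0 lam_inj k_closest Lambda_norm c_lt1.
split.
  apply: unitmx_ker0 => r; rewrite mulmxBl mul1mx => /eqP; rewrite subr_eq0 => /eqP r_eq.
  have Pr : Pk k *m r = r by rewrite {1}r_eq !mulmxA Pk_Dk -r_eq.
  by apply: fix0; rewrite {1}r_eq -[_ *m Pk k *m r]mulmxA Pr.
move=> eta eta_neq0 eig.
have etak_neq0 : eta k 0 != 0.
  apply: contraNneq eta_neq0 => etak0; apply/eqP/fix0.
  by rewrite (Dk_E_eigvec lam_inj k_closest eig) Pk_mul etak0 scale0r subr0.
split => //; set eta1 := (eta k 0)^-1 *: eta.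
have eig1 : (Sigma lam + E) *m eta1 = x *: eta1.
  by rewrite -scalemxAr eig !scalerA mulrC.
have eta1k : eta1 k 0 = 1 by rewrite mxE mulVf.
have := Dk_E_fixpoint_bound lam_inj k_closest Lambda_norm c_lt1 (a := 1) (v := eta1 - mu k).
rewrite normr1 mul1r vnorm_absDk_E_mu; apply.
by rewrite scale1r [mu k + _]addrC subrK (Dk_E_eigvec lam_inj k_closest eig1) Pk_mul eta1k scale1r.
Qed.
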